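(* Let $\bar\eta>0$ be as in the setting below. For every $\eta_2\ge\bar\eta$, every $0\le\epsilon\le1/2$ and every $0<\bar\epsilon\le1$, the solution $\phi(\cdot;\eta_2,\epsilon,-\bar\epsilon)$ satisfies $\phi(\xi;\eta_2,\epsilon,-\bar\epsilon)<1$ for all $\xi\in[\bar\eta,\eta_2]$ belonging to its maximal existence interval.
   Context: Fix $d>2$. Define $f(\eta,v,w)=\frac{d+1}{\eta}w-\frac\eta2 w+\frac1d\eta v w+v^2-v$. For $(\eta_0,v_0,w_0)$ with $\eta_0>0$, $\phi(\xi;\eta_0,v_0,w_0)$ denotes the solution of $\phi''+f(\xi,\phi,\phi')=0$ with $\phi(\eta_0)=v_0$, $\phi'(\eta_0)=w_0$. $\bar\eta>0$ is a number such that for every $\eta_1\ge\bar\eta$, every solution $\phi$ of $\phi''+f(\xi,\phi,\phi')=0$ with $\phi(\eta_1)=1$, $\phi'(\eta_1)\le0$ satisfies $\phi'(\eta_2)<-1$ for all $\eta_2>\eta_1$ with $\phi(\eta_2)\in[0,1/2]$ (such $\bar\eta$ exists). *)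

From Stdlib Require Import Reals.
From Coquelicot Require Import Coquelicot.
Open Scope R_scope.

Definition f (d eta v w : R) : R :=
  (d + 1) / eta * w - eta / 2 * w + / d * eta * v * w + v ^ 2 - v.

Definition in_oint (a b : Rbar) (x : R) : Prop := Rbar_lt a x /\ Rbar_lt x b.

Definition is_solution (d : R) (a b : Rbar) (phi dphi : R -> R) : Prop :=
  Rbar_le (Finite 0) a /\ Rbar_lt a b /\
  forall x, in_oint a b x ->
    is_derive phi x (dphi x) /\ is_derive dphi x (- f d x (phi x) (dphi x)).

Definition is_maximal_solution (d eta0 v0 w0 : R) (a b : Rbar) (phi dphi : R -> R) : Prop :=
  is_solution d a b phi dphi /\ in_oint a b eta0 /\ phi eta0 = v0 /\ dphi eta0 = w0 /\
  forall (a' b' : Rbar) (psi dpsi : R -> R),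
    is_solution d a' b' psi dpsi -> in_oint a' b' eta0 -> psi eta0 = v0 -> dpsi eta0 = w0 ->
    Rbar_le a a' /\ Rbar_le b' b.

Definition eta_bar_property (d eta_bar : R) : Prop :=
  forall (eta1 : R), eta_bar <= eta1 ->
  forall (a b : Rbar) (phi dphi : R -> R),
    is_solution d a b phi dphi -> in_oint a b eta1 ->
    phi eta1 = 1 -> dphi eta1 <= 0 ->
    forall eta2, in_oint a b eta2 -> eta1 < eta2 ->
      0 <= phi eta2 <= 1 / 2 -> dphi eta2 < -1.

(* If phi reached 1 somewhere in [eta_bar, eta2], consider the last point m < eta2
   where phi = 1.  To the right of m, phi stays below 1, so phi'(m) <= 0, and the
   defining property of eta_bar forces phi'(eta2) < -1, since phi(eta2) = eps lies
   in [0, 1/2].  This contradicts phi'(eta2) = -epsb >= -1. *)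
From Stdlib Require Import Reals Lra.
From Coquelicot Require Import Coquelicot.
Open Scope R_scope.

Lemma is_derive_continuity_pt (phi : R -> R) (x l : R) :
  is_derive phi x l -> continuity_pt phi x.
Proof.
intros Hder; apply continuity_pt_filterlim.
apply (ex_derive_continuous (V := R_NormedModule)); exists l; exact Hder.
Qed.

Lemma in_oint_between (a b : Rbar) (x y z : R) :
  in_oint a b x -> in_oint a b z -> x <= y <= z -> in_oint a b y.
Proof.
intros [Hax _] [_ Hzb] [Hxy Hyz]; split.
- apply Rbar_lt_le_trans with (Finite x); [exact Hax | exact Hxy].
- apply Rbar_le_lt_trans with (Finite z); [exact Hyz | exact Hzb].
Qed.

Lemma is_solution_continuity_pt (d : R) (a b : Rbar) (phi dphi : R -> R) (x : R) :
  is_solution d a b phi dphi -> in_oint a b x -> continuity_pt phi x.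
Proof.
intros [_ [_ Hsol]] Hx.
exact (is_derive_continuity_pt phi x (dphi x) (proj1 (Hsol x Hx))).
Qed.

(* m is the supremum of the points of [x, z] where c <= phi. *)
Lemma last_crossing (phi : R -> R) (c x z : R) :
  x <= z -> (forall y, x <= y <= z -> continuity_pt phi y) ->
  c <= phi x -> phi z < c ->
  exists m, x <= m < z /\ phi m = c /\ (forall y, m < y <= z -> phi y < c).
Proof.
intros Hxz Hcont Hx Hz.
set (E := fun y => x <= y <= z /\ c <= phi y).
destruct (completeness E) as [m [Hub Hlub]].
{ exists z; intros y Hy; apply Hy. }
{ exists x; split; [lra | exact Hx]. }
assert (Hxm : x <= m) by (apply Hub; split; [lra | exact Hx]).
assert (Hmz : m <= z) by (apply Hlub; intros y Hy; apply Hy).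
assert (Hright : forall y, m < y <= z -> phi y < c).
{ intros y Hy; destruct (Rlt_or_le (phi y) c) as [Hlt | Hle]; [exact Hlt |].
  assert (y <= m) by (apply Hub; split; [lra | exact Hle]); lra. }
assert (Hcont_m := proj1 (continuity_pt_locally phi m) (Hcont m (conj Hxm Hmz))).
assert (Hge : c <= phi m).
{ destruct (Rlt_or_le (phi m) c) as [Hlt | Hle]; [exfalso | exact Hle].
  destruct (Hcont_m (mkposreal _ (proj2 (Rlt_0_minus _ _) Hlt))) as [[e He] Hball].
  assert (Hbound : is_upper_bound E (m - e)).
  { intros y [Hy Hcy]; destruct (Rle_or_lt y (m - e)) as [Hle | Hlt']; [exact Hle | exfalso].
    assert (y <= m) by (apply Hub; split; assumption).
    assert (Hd : Rabs (phi y - phi m) < c - phi m).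
    { apply Hball; change (Rabs (y - m) < e); apply Rabs_def1; simpl in *; lra. }
    apply Rabs_def2 in Hd; simpl in Hd; lra. }
  assert (m <= m - e) by (apply Hlub; exact Hbound); simpl in *; lra. }
assert (Hmz' : m < z).
{ destruct (Rle_lt_or_eq_dec m z Hmz) as [Hlt | Heq]; [exact Hlt | subst; lra]. }
exists m; split; [lra | split; [| exact Hright]].
destruct (Rle_lt_or_eq_dec c (phi m) Hge) as [Hlt | Heq]; [exfalso | now symmetry].
destruct (Hcont_m (mkposreal _ (proj2 (Rlt_0_minus _ _) Hlt))) as [[e He] Hball].
set (y := Rmin (m + e / 2) z).
assert (Hy : m < y <= z) by (unfold y; split; [apply Rmin_glb_lt | apply Rmin_r]; lra).
assert (Hd : Rabs (phi y - phi m) < phi m - c).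
{ apply Hball; change (Rabs (y - m) < e); apply Rabs_def1;
    [assert (y <= m + e / 2) by apply Rmin_l |]; simpl in *; lra. }
apply Rabs_def2 in Hd; simpl in Hd; specialize (Hright y Hy); lra.
Qed.

Lemma is_derive_nonpos_at_right_max (phi : R -> R) (m z l : R) :
  is_derive phi m l -> m < z -> (forall y, m < y <= z -> phi y < phi m) -> l <= 0.
Proof.
intros Hder Hmz Hbelow; destruct (Rle_or_lt l 0) as [Hle | Hpos]; [exact Hle | exfalso].
destruct (proj1 (is_derive_Reals phi m l) Hder l Hpos) as [[e He] Hquot].
set (h := Rmin (e / 2) (z - m)).
assert (Hh : 0 < h <= z - m) by (unfold h; split; [apply Rmin_glb_lt | apply Rmin_r]; lra).
assert (Hhe : h <= e / 2) by apply Rmin_l.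
assert (Habs : Rabs h < e) by (rewrite Rabs_right; lra).
specialize (Hquot h ltac:(lra) Habs); apply Rabs_def2 in Hquot.
assert (Hincr : 0 < (phi (m + h) - phi m) / h) by lra.
assert (0 < phi (m + h) - phi m).
{ replace (phi (m + h) - phi m) with ((phi (m + h) - phi m) / h * h) by (field; lra).
  apply Rmult_lt_0_compat; lra. }
specialize (Hbelow (m + h) ltac:(lra)); lra.
Qed.

Theorem corollaryA3 (d eta_bar : R) :
  2 < d -> 0 < eta_bar -> eta_bar_property d eta_bar ->
  forall (eta2 eps epsb : R),
    eta_bar <= eta2 -> 0 <= eps <= 1 / 2 -> 0 < epsb <= 1 ->
    forall (a b : Rbar) (phi dphi : R -> R),
      is_maximal_solution d eta2 eps (- epsb) a b phi dphi ->
      forall xi, eta_bar <= xi <= eta2 -> in_oint a b xi -> phi xi < 1.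
Proof.
intros _ _ Heta_bar eta2 eps epsb Heta2 Heps Hepsb a b phi dphi
  [Hsol [Hin2 [Hphi2 [Hdphi2 _]]]] xi Hxi Hinxi.
destruct (Rlt_or_le (phi xi) 1) as [Hlt | Hge]; [exact Hlt | exfalso].
assert (Hbetween : forall y, xi <= y <= eta2 -> in_oint a b y)
  by (intros y Hy; exact (in_oint_between a b xi y eta2 Hinxi Hin2 Hy)).
destruct (last_crossing phi 1 xi eta2) as [m [Hm [Hphim Hright]]]; try lra.
{ intros y Hy; exact (is_solution_continuity_pt d a b phi dphi y Hsol (Hbetween y Hy)). }
assert (Hinm : in_oint a b m) by (apply Hbetween; lra).
assert (Hdm : dphi m <= 0).
{ apply (is_derive_nonpos_at_right_max phi m eta2); [| lra | rewrite Hphim; exact Hright].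
  exact (proj1 (proj2 (proj2 Hsol) m Hinm)). }
assert (dphi eta2 < -1)
  by exact (Heta_bar m ltac:(lra) a b phi dphi Hsol Hinm Hphim Hdm eta2 Hin2 (proj2 Hm) ltac:(lra)).
lra.
Qed.
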